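(* Let $X$ be a real Hilbert space, let $T\colon X\to X$ be averaged nonexpansive and boundedly linearly regular, let $\rho>0$, and let $C$ be a nonempty subset of $\operatorname{Fix}T$. Then there exist $\alpha\in[0,1[$, $\beta\in]0,1]$ and $\gamma>0$ such that for every $x$ with $\|x\|\le\rho$: (a) $d_{\operatorname{Fix}T}(Tx)\le\alpha\,d_{\operatorname{Fix}T}(x)$; (b) $\beta\,d^2_{\operatorname{Fix}T}(x)\le\big(d_{\operatorname{Fix}T}(x)-d_{\operatorname{Fix}T}(Tx)\big)^2\le\|x-Tx\|^2$; (c) $d_C^2(Tx)\le d_C^2(x)-\gamma\,d^2_{\operatorname{Fix}T}(x)$. If $T$ is linearly regular, these constants can be chosen independently of $\rho$.
   Context: $T$ is averaged nonexpansive if $T=(1-\lambda)\mathrm{Id}+\lambda N$ with $\lambda\in[0,1[$ and $N$ nonexpansive. $T$ with $\operatorname{Fix}T\neq\varnothing$ is linearly regular if there is $\kappa\ge0$ with $d_{\operatorname{Fix}T}(x)\le\kappa\|x-Tx\|$ for all $x$; boundedly linearly regular if for each $\rho>0$ there is $\kappa\ge0$ with this for all $\|x\|\le\rho$. $d_S$ is the distance to $S$. *)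

From Stdlib Require Import Reals Lra ClassicalEpsilon.
Open Scope R_scope.

Record RHilbert := {
  hcarrier :> Type;
  vadd : hcarrier -> hcarrier -> hcarrier;
  vscal : R -> hcarrier -> hcarrier;
  vzero : hcarrier;
  vopp : hcarrier -> hcarrier;
  inner : hcarrier -> hcarrier -> R;
  vadd_assoc : forall x y z, vadd x (vadd y z) = vadd (vadd x y) z;
  vadd_comm : forall x y, vadd x y = vadd y x;
  vadd_0 : forall x, vadd x vzero = x;
  vadd_opp : forall x, vadd x (vopp x) = vzero;
  vscal_1 : forall x, vscal 1 x = x;
  vscal_assoc : forall a b x, vscal a (vscal b x) = vscal (a * b) x;
  vscal_distr_v : forall a x y, vscal a (vadd x y) = vadd (vscal a x) (vscal a y);
  vscal_distr_s : forall a b x, vscal (a + b) x = vadd (vscal a x) (vscal b x);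
  inner_sym : forall x y, inner x y = inner y x;
  inner_add_l : forall x y z, inner (vadd x y) z = inner x z + inner y z;
  inner_scal_l : forall a x y, inner (vscal a x) y = a * inner x y;
  inner_pos : forall x, 0 <= inner x x;
  inner_def : forall x, inner x x = 0 -> x = vzero;
  complete : forall u : nat -> hcarrier,
    (forall eps, 0 < eps -> exists N, forall m n, (N <= m)%nat -> (N <= n)%nat ->
        sqrt (inner (vadd (u m) (vopp (u n))) (vadd (u m) (vopp (u n)))) < eps) ->
    exists l, forall eps, 0 < eps -> exists N, forall n, (N <= n)%nat ->
        sqrt (inner (vadd (u n) (vopp l)) (vadd (u n) (vopp l))) < eps
}.

Arguments vadd {_}. Arguments vscal {_}. Arguments vzero {_}.
Arguments vopp {_}. Arguments inner {_}.

Definition vsub {X : RHilbert} (x y : X) : X := vadd x (vopp y).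
Definition norm {X : RHilbert} (x : X) : R := sqrt (inner x x).

Definition is_glb (E : R -> Prop) (m : R) : Prop :=
  (forall r, E r -> m <= r) /\ (forall b, (forall r, E r -> b <= r) -> b <= m).

(* d_S(x) = inf_{s in S} ||x - s||  (meaningful for S nonempty) *)
Definition dist {X : RHilbert} (S : X -> Prop) (x : X) : R :=
  epsilon (inhabits 0)
    (fun d => is_glb (fun r => exists s, S s /\ r = norm (vsub x s)) d).

Definition Fix {X : RHilbert} (T : X -> X) : X -> Prop := fun x => T x = x.

Definition nonexpansive {X : RHilbert} (N : X -> X) : Prop :=
  forall x y, norm (vsub (N x) (N y)) <= norm (vsub x y).

Definition averaged_nonexpansive {X : RHilbert} (T : X -> X) : Prop :=
  exists (lambda : R) (N : X -> X), 0 <= lambda < 1 /\ nonexpansive N /\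
    forall x, T x = vadd (vscal (1 - lambda) x) (vscal lambda (N x)).

Definition linearly_regular {X : RHilbert} (T : X -> X) : Prop :=
  (exists z, Fix T z) /\
  exists kappa, 0 <= kappa /\
    forall x, dist (Fix T) x <= kappa * norm (vsub x (T x)).

Definition boundedly_linearly_regular {X : RHilbert} (T : X -> X) : Prop :=
  (exists z, Fix T z) /\
  forall rho, 0 < rho -> exists kappa, 0 <= kappa /\
    forall x, norm x <= rho -> dist (Fix T) x <= kappa * norm (vsub x (T x)).

Definition lemma3p7_props {X : RHilbert} (T : X -> X) (C : X -> Prop)
    (alpha beta gamma : R) (x : X) : Prop :=
  dist (Fix T) (T x) <= alpha * dist (Fix T) x /\
  beta * (dist (Fix T) x) ^ 2 <= (dist (Fix T) x - dist (Fix T) (T x)) ^ 2 /\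
  (dist (Fix T) x - dist (Fix T) (T x)) ^ 2 <= (norm (vsub x (T x))) ^ 2 /\
  (dist C (T x)) ^ 2 <= (dist C x) ^ 2 - gamma * (dist (Fix T) x) ^ 2.

(* An averaged map T = (1 - λ) Id + λ N with N nonexpansive is strongly Fejér
   monotone: for every fixed point z, ‖Tx - z‖² ≤ ‖x - z‖² - (1 - λ) ‖x - Tx‖².
   Taking infima over z in a nonempty S ⊆ Fix T gives
   d_S(Tx)² ≤ d_S(x)² - (1 - λ) ‖x - Tx‖².  Linear regularity d_{Fix T}(x) ≤ κ ‖x - Tx‖
   turns the last term into γ d_{Fix T}(x)² with γ = (1 - λ)/(κ + 1)²; with S = Fix T
   this yields the contraction factor α = √(1 - γ), with S = C it is (c), and (b)
   follows from (a) together with the 1-Lipschitz property of d_{Fix T}. *)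

From Pilot Require Import Defs.
From Stdlib Require Import Reals Lra Psatz ClassicalEpsilon.
Import Defs.
Open Scope R_scope.

Section InnerProduct.
Variable X : RHilbert.

Lemma inner_zero_l (y : X) : inner vzero y = 0.
Proof. pose proof (inner_add_l X vzero vzero y) as h. rewrite vadd_0 in h. lra. Qed.

Lemma inner_opp_l (x y : X) : inner (vopp x) y = - inner x y.
Proof.
  pose proof (inner_add_l X x (vopp x) y) as h.
  rewrite vadd_opp, inner_zero_l in h. lra.
Qed.

Lemma inner_add_r (x y z : X) : inner x (vadd y z) = inner x y + inner x z.
Proof. rewrite inner_sym, inner_add_l, (inner_sym X y x), (inner_sym X z x). reflexivity. Qed.

Lemma inner_scal_r a (x y : X) : inner x (vscal a y) = a * inner x y.
Proof. rewrite inner_sym, inner_scal_l, (inner_sym X y x). reflexivity. Qed.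

Lemma inner_opp_r (x y : X) : inner x (vopp y) = - inner x y.
Proof. rewrite inner_sym, inner_opp_l, (inner_sym X y x). reflexivity. Qed.

Lemma inner_zero_r (y : X) : inner y vzero = 0.
Proof. rewrite inner_sym. apply inner_zero_l. Qed.

Lemma norm_nonneg (x : X) : 0 <= norm x.
Proof. apply sqrt_pos. Qed.

Lemma norm_sq (x : X) : norm x ^ 2 = inner x x.
Proof. apply pow2_sqrt, inner_pos. Qed.

Lemma vsub_eq0 (a b : X) : vsub a b = vzero -> a = b.
Proof.
  unfold vsub; intro h.
  assert (hb : vadd (vopp b) b = vzero) by (rewrite vadd_comm; apply vadd_opp).
  rewrite <- (vadd_0 X a), <- hb, vadd_assoc, h, vadd_comm, vadd_0. reflexivity.
Qed.

End InnerProduct.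

Hint Rewrite inner_add_l inner_add_r inner_scal_l inner_scal_r inner_opp_l inner_opp_r
  inner_zero_l inner_zero_r : inner.

Lemma inner_le_norm_mul (X : RHilbert) (a b : X) : inner a b <= norm a * norm b.
Proof.
  pose proof (norm_nonneg X a). pose proof (norm_nonneg X b).
  destruct (Req_dec (inner b b) 0) as [hb0|hb0].
  { apply inner_def in hb0. subst b. rewrite inner_zero_r. nra. }
  pose proof (inner_pos X b) as hb.
  set (t := inner a b / inner b b).
  (* 0 ≤ ‖a - t b‖² with t the projection coefficient *)
  pose proof (inner_pos X (vsub a (vscal t b))) as hproj. unfold vsub in hproj.
  autorewrite with inner in hproj. rewrite (inner_sym X b a) in hproj.
  assert (ht : t * inner b b = inner a b) by (unfold t; field; auto).
  assert (hsq : inner a b ^ 2 <= inner a a * inner b b) by nra.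
  destruct (Rle_dec (inner a b) 0); [nra|].
  unfold norm. rewrite <- sqrt_mult by apply inner_pos.
  rewrite <- (sqrt_pow2 (inner a b)) by lra. apply sqrt_le_1_alt. exact hsq.
Qed.

Lemma norm_sub_triangle (X : RHilbert) (x y s : X) :
  norm (vsub x s) <= norm (vsub x y) + norm (vsub y s).
Proof.
  pose proof (inner_le_norm_mul X (vsub x y) (vsub y s)) as hcs.
  pose proof (norm_sq X (vsub x y)) as hA. pose proof (norm_sq X (vsub y s)) as hB.
  pose proof (norm_nonneg X (vsub x y)). pose proof (norm_nonneg X (vsub y s)).
  remember (norm (vsub x y)) as A eqn:eA. remember (norm (vsub y s)) as B eqn:eB.
  clear eA eB.
  unfold norm. rewrite <- (sqrt_pow2 (A + B)) by lra. apply sqrt_le_1_alt.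
  unfold vsub in *. autorewrite with inner in *.
  rewrite (inner_sym X y x), (inner_sym X s x), (inner_sym X s y) in *. nra.
Qed.

Section Distance.
Variables (X : RHilbert) (A : X -> Prop).

Lemma dist_is_glb x : (exists s, A s) ->
  is_glb (fun r => exists s, A s /\ r = norm (vsub x s)) (dist A x).
Proof.
  intro hne. unfold dist. apply epsilon_spec.
  destruct (completeness (fun r => exists s, A s /\ - r = norm (vsub x s)))
    as [m [hub hlub]].
  - exists 0. intros r [s [_ hr]]. pose proof (norm_nonneg X (vsub x s)). lra.
  - destruct hne as [s hs]. exists (- norm (vsub x s)), s. split; [exact hs | lra].
  - exists (- m). split.
    + intros r [s [hs hr]].
      assert (- r <= m) by (apply hub; exists s; split; [exact hs | lra]). lra.
    + intros b hb.
      assert (m <= - b); [|lra].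
      apply hlub. intros r [s [hs hr]].
      assert (b <= - r) by (apply hb; exists s; split; [exact hs | lra]). lra.
Qed.

Lemma dist_le_norm x s : A s -> dist A x <= norm (vsub x s).
Proof.
  intro hs. apply (proj1 (dist_is_glb x (ex_intro _ s hs))). exists s; auto.
Qed.

Lemma dist_ge_lower_bound x b : (exists s, A s) ->
  (forall s, A s -> b <= norm (vsub x s)) -> b <= dist A x.
Proof. intros hne h. apply (proj2 (dist_is_glb x hne)). intros r [s [hs ->]]. auto. Qed.

Lemma dist_nonneg x : (exists s, A s) -> 0 <= dist A x.
Proof. intro hne. apply dist_ge_lower_bound; [exact hne|]. intros. apply norm_nonneg. Qed.

Lemma dist_lipschitz x y : (exists s, A s) ->
  dist A x <= dist A y + norm (vsub x y).
Proof.
  intro hne. assert (dist A x - norm (vsub x y) <= dist A y); [|lra].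
  apply dist_ge_lower_bound; [exact hne|]. intros s hs.
  pose proof (dist_le_norm x s hs). pose proof (norm_sub_triangle X x y s). lra.
Qed.

End Distance.

Section AveragedMap.
Variables (X : RHilbert) (lam : R) (N T : X -> X).
Hypotheses (lam_range : 0 <= lam < 1) (N_nonexp : nonexpansive N)
  (T_def : forall x, T x = vadd (vscal (1 - lam) x) (vscal lam (N x))).

Lemma Fix_averaged_Fix_N z : lam <> 0 -> Fix T z -> N z = z.
Proof.
  intros hlam hz. unfold Fix in hz. rewrite T_def in hz.
  assert (hv : forall v, inner (N z) v = inner z v).
  { intro v. pose proof (f_equal (fun u => inner u v) hz) as h. simpl in h.
    autorewrite with inner in h. apply (Rmult_eq_reg_l lam); [lra | exact hlam]. }
  apply vsub_eq0, inner_def. unfold vsub. autorewrite with inner.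
  rewrite (hv (N z)), (hv z), (inner_sym X z (N z)). lra.
Qed.

Lemma averaged_strongly_Fejer x z : Fix T z ->
  norm (vsub (T x) z) ^ 2 <= norm (vsub x z) ^ 2 - (1 - lam) * norm (vsub x (T x)) ^ 2.
Proof.
  intro hz. rewrite !norm_sq.
  assert (hN : lam * inner (vsub (N x) z) (vsub (N x) z)
               <= lam * inner (vsub x z) (vsub x z)).
  { destruct (Req_dec lam 0) as [->|hlam]; [lra|].
    pose proof (N_nonexp x z) as h. rewrite (Fix_averaged_Fix_N z hlam hz) in h.
    apply sqrt_le_0 in h; try apply inner_pos. nra. }
  pose proof (inner_pos X (vsub x (N x))) as hD.
  assert (0 <= lam * (1 - lam) ^ 2 * inner (vsub x (N x)) (vsub x (N x))).
  { apply Rmult_le_pos; [|exact hD]. apply Rmult_le_pos; [lra | apply pow2_ge_0]. }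
  (* Tx - z = (1-λ)(x-z) + λ(Nx-z) and x - Tx = λ(x - Nx) *)
  rewrite !T_def. unfold vsub in *. autorewrite with inner in *.
  rewrite ?(inner_sym X (N x) x), ?(inner_sym X z x), ?(inner_sym X z (N x)) in *.
  nra.
Qed.

Lemma dist_sq_averaged_decrease (A : X -> Prop) x :
  (exists s, A s) -> (forall s, A s -> Fix T s) ->
  dist A (T x) ^ 2 <= dist A x ^ 2 - (1 - lam) * norm (vsub x (T x)) ^ 2.
Proof.
  intros hne hsub.
  set (r := dist A (T x) ^ 2 + (1 - lam) * norm (vsub x (T x)) ^ 2).
  pose proof (dist_nonneg X A (T x) hne). pose proof (dist_nonneg X A x hne).
  assert (hr : 0 <= r).
  { unfold r. pose proof (pow2_ge_0 (norm (vsub x (T x)))). nra. }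
  assert (h : sqrt r <= dist A x).
  { apply dist_ge_lower_bound; [exact hne|]. intros s hs.
    rewrite <- (sqrt_pow2 (norm (vsub x s))) by apply norm_nonneg.
    apply sqrt_le_1_alt.
    pose proof (dist_le_norm X A (T x) s hs).
    pose proof (averaged_strongly_Fejer x s (hsub s hs)). unfold r. nra. }
  pose proof (pow2_sqrt r hr). pose proof (sqrt_pos r). unfold r in *. nra.
Qed.

End AveragedMap.

Lemma le_sqrt_mul_of_sq_le (d d' g : R) : 0 <= d -> 0 <= d' -> g <= 1 ->
  d' ^ 2 <= (1 - g) * d ^ 2 -> d' <= sqrt (1 - g) * d.
Proof.
  intros hd hd' hg h.
  pose proof (pow2_sqrt (1 - g)) as hs. pose proof (sqrt_pos (1 - g)).
  destruct (Rle_dec d' (sqrt (1 - g) * d)) as [|hn]; [assumption|].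
  apply Rnot_le_lt in hn.
  assert (0 <= sqrt (1 - g) * d) by nra.
  assert ((sqrt (1 - g) * d) ^ 2 < d' ^ 2) by nra. nra.
Qed.

Lemma lemma3p7_props_of_gap (X : RHilbert) (T : X -> X) lam N
  (Hlam : 0 <= lam < 1) (HN : nonexpansive N)
  (HT : forall x, T x = vadd (vscal (1 - lam) x) (vscal lam (N x)))
  (C : X -> Prop) (HCne : exists c, C c) (HCsub : forall c, C c -> Fix T c)
  (Hfix : exists z, Fix T z) gamma (Hgamma : 0 <= gamma <= 1) x
  (Hgap : gamma * dist (Fix T) x ^ 2 <= (1 - lam) * norm (vsub x (T x)) ^ 2) :
  lemma3p7_props T C (sqrt (1 - gamma)) ((1 - sqrt (1 - gamma)) ^ 2) gamma x.
Proof.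
  pose proof (dist_sq_averaged_decrease X lam N T Hlam HN HT (Fix T) x Hfix (fun s h => h))
    as hFix.
  pose proof (dist_sq_averaged_decrease X lam N T Hlam HN HT C x HCne HCsub) as hC.
  pose proof (dist_lipschitz X (Fix T) x (T x) Hfix) as hlip.
  pose proof (dist_nonneg X (Fix T) x Hfix) as hd.
  pose proof (dist_nonneg X (Fix T) (T x) Hfix) as hd'.
  pose proof (norm_nonneg X (vsub x (T x))) as hq.
  assert (hcontr : dist (Fix T) (T x) <= sqrt (1 - gamma) * dist (Fix T) x).
  { apply le_sqrt_mul_of_sq_le; nra. }
  pose proof (sqrt_pos (1 - gamma)) as ha0.
  assert (ha1 : sqrt (1 - gamma) <= 1).
  { pose proof (pow2_sqrt (1 - gamma)). nra. }
  unfold lemma3p7_props. set (alpha := sqrt (1 - gamma)) in *.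
  remember (dist (Fix T) x) as d. remember (dist (Fix T) (T x)) as d'.
  remember (norm (vsub x (T x))) as q.
  split; [exact hcontr|]. split; [|split].
  - assert ((1 - alpha) * d <= d - d') by nra.
    assert (0 <= (1 - alpha) * d) by nra. nra.
  - assert (0 <= d - d') by nra. nra.
  - lra.
Qed.

Lemma lemma3p7_on (X : RHilbert) (T : X -> X) (HT : averaged_nonexpansive T)
  (C : X -> Prop) (HCne : exists c, C c) (HCsub : forall c, C c -> Fix T c)
  (Hfix : exists z, Fix T z) (P : X -> Prop) kappa (Hk : 0 <= kappa)
  (Hreg : forall x, P x -> dist (Fix T) x <= kappa * norm (vsub x (T x))) :
  exists alpha beta gamma,
    0 <= alpha < 1 /\ 0 < beta <= 1 /\ 0 < gamma /\
    forall x, P x -> lemma3p7_props T C alpha beta gamma x.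
Proof.
  destruct HT as [lam [N [Hlam [HN HTe]]]].
  (* κ + 1 rather than κ, so that γ > 0 also when κ = 0 *)
  set (gamma := (1 - lam) / (kappa + 1) ^ 2).
  assert (hgK : gamma * (kappa + 1) ^ 2 = 1 - lam) by (unfold gamma; field; lra).
  assert (hg0 : 0 < gamma) by (unfold gamma; apply Rdiv_lt_0_compat; nra).
  assert (hg1 : gamma <= 1) by nra.
  pose proof (pow2_sqrt (1 - gamma)) as ha2. pose proof (sqrt_pos (1 - gamma)).
  assert (ha1 : sqrt (1 - gamma) < 1) by nra.
  exists (sqrt (1 - gamma)), ((1 - sqrt (1 - gamma)) ^ 2), gamma.
  split; [lra|]. split; [split; nra|]. split; [exact hg0|].
  intros x hx.
  apply (lemma3p7_props_of_gap X T lam N Hlam HN HTe C HCne HCsub Hfix); [lra|].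
  pose proof (Hreg x hx). pose proof (dist_nonneg X (Fix T) x Hfix).
  pose proof (norm_nonneg X (vsub x (T x))).
  assert (dist (Fix T) x ^ 2 <= (kappa + 1) ^ 2 * norm (vsub x (T x)) ^ 2) by nra.
  rewrite <- hgK. nra.
Qed.

Theorem lemma3p7 (X : RHilbert) (T : X -> X)
  (HT : averaged_nonexpansive T)
  (Hblr : boundedly_linearly_regular T)
  (C : X -> Prop) (HCne : exists c, C c) (HCsub : forall c, C c -> Fix T c) :
  (forall rho, 0 < rho ->
     exists alpha beta gamma,
       0 <= alpha < 1 /\ 0 < beta <= 1 /\ 0 < gamma /\
       forall x, norm x <= rho -> lemma3p7_props T C alpha beta gamma x) /\
  (linearly_regular T ->
     exists alpha beta gamma,
       0 <= alpha < 1 /\ 0 < beta <= 1 /\ 0 < gamma /\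
       forall x, lemma3p7_props T C alpha beta gamma x).
Proof.
  destruct Hblr as [Hfix Hbounded]. split.
  - intros rho hrho. destruct (Hbounded rho hrho) as [kappa [hk hreg]].
    exact (lemma3p7_on X T HT C HCne HCsub Hfix (fun x => norm x <= rho) kappa hk hreg).
  - intros [_ [kappa [hk hreg]]].
    destruct (lemma3p7_on X T HT C HCne HCsub Hfix (fun _ => True) kappa hk
                (fun x _ => hreg x)) as [alpha [beta [gamma [ha [hb [hg hprops]]]]]].
    exists alpha, beta, gamma.
    split; [exact ha|]. split; [exact hb|]. split; [exact hg|].
    intro x. exact (hprops x I).
Qed.
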